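(* Let $a$ be an integer and let $n$ be a positive odd integer. Then $$\det\left[(-1)^{\lfloor \frac{aj-(a+1)k}{n}\rfloor}\right]_{1\leqslant j,k\leqslant n}=\det\left[(-1)^{\lceil \frac{(a+1)j-ak}{n}\rceil}\right]_{1\leqslant j,k\leqslant n}=\left(\frac{a(a+1)}{n}\right)(-1)^{(n+1)/2}2^{n-1}.$$ Also, $$\det\left[2^{\lfloor \frac{aj-(a+1)k}{n}\rfloor}\right]_{1\leqslant j,k\leqslant n}=\left(\frac{a(a+1)}{n}\right)2^{(1-3n)/2}$$ and $$\det\left[2^{\lceil \frac{(a+1)j-ak}{n}\rceil}\right]_{1\leqslant j,k\leqslant n}=\left(\frac{a(a+1)}{n}\right)2^{(n+1)/2}.$$
   Context: $\lfloor x\rfloor$ is the largest integer not exceeding $x$ and $\lceil x\rceil$ is the least integer not smaller than $x$. $\left(\frac{\cdot}{n}\right)$ denotes the Jacobi symbol modulo the positive odd integer $n$ (equal to $0$ when the argument is not coprime to $n$, and $\left(\frac{\cdot}{1}\right)=1$). *)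

From mathcomp Require Import all_boot all_order all_algebra.
Set Implicit Arguments. Unset Strict Implicit. Unset Printing Implicit Defensive.
Import Order.TTheory GRing.Theory Num.Theory.
Local Open Scope ring_scope.

Definition floor_div (x : int) (n : nat) : int := (x %/ n%:Z)%Z.
Definition ceil_div (x : int) (n : nat) : int := - ((- x) %/ n%:Z)%Z.

Definition legendre (a : int) (p : nat) : int :=
  if (p%:Z %| a)%Z then 0
  else if [exists x : 'I_p, ((x%:Z) ^+ 2 == a %[mod p%:Z])%Z] then 1 else -1.

Definition jacobi (a : int) (n : nat) : int :=
  \prod_(p <- primes n) legendre a p ^+ logn p n.

(* Write a j = n Q_j + u_j and b k = n S_k + w_k with 0 <= u_j, w_k < n.  Then
   floor((a j - b k) / n) = Q_j - S_k - [u_j < w_k], so x^floor((a j - b k) / n) is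
   diag(x^Q_j) [if w_k <= u_j then 1 else 1/x] diag(x^-S_k).  When a and b are prime
   to n, j |-> u_j and k |-> w_k are permutations, and the middle matrix is obtained
   by permuting the rows and columns of the matrix with 1 on and below the diagonal
   and 1/x above it, whose determinant is (1 - 1/x)^(n-1); otherwise two of its rows
   or columns coincide.  By Zolotarev's lemma, extended to Jacobi symbols, the sign
   of x |-> c x on Z/nZ is (c/n), so the signs contribute (ab/n); summing the Q_j and
   S_k gives the power of x.  Zolotarev's lemma holds for primes because
   multiplication by a primitive root is a cycle of even length on the units, and it
   passes to n = m q because, in base m, multiplication by a modulo m q is a skew
   product of multiplication by a modulo m with translates of multiplication by a
   modulo q.  The ceiling determinants are the floor ones for 1/x, transposed. *)

From mathcomp Require Import all_boot all_order all_algebra all_fingroup all_solvable.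
From mathcomp Require Import ring zify.
Set Implicit Arguments. Unset Strict Implicit. Unset Printing Implicit Defensive.
Import Order.TTheory GRing.Theory Num.Theory.

Lemma odd_perm_morph (T1 T2 : finType) (phi : {perm T2} -> {perm T1}) :
    {morph phi : s t / (s * t)%g} ->
    (forall x y, x != y -> odd_perm (phi (tperm x y))) ->
  forall s, odd_perm (phi s) = odd_perm s.
Proof.
move=> phiM phi_tperm s.
have phi1 : phi 1%g = 1%g by apply: (mulIg (phi 1%g)); rewrite -phiM !mul1g.
have oddM := big_morph (@odd_perm _) (@odd_permM _) (@odd_perm1 _).
case: (prod_tpermP s) => ts -> dts.
rewrite (big_morph phi phiM phi1) !oddM big_seq [RHS]big_seq.
by apply: eq_bigr => t /(allP dts) dt; rewrite phi_tperm ?odd_tperm.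
Qed.

Lemma odd_perm_transport (T1 T2 : finType) (e : T1 -> T2) (e' : T2 -> T1)
    (s1 : {perm T1}) (s2 : {perm T2}) :
    cancel e e' -> cancel e' e -> (forall x, e (s1 x) = s2 (e x)) ->
  odd_perm s1 = odd_perm s2.
Proof.
move=> eK e'K es.
have conj_inj (s : {perm T2}) : injective (e' \o s \o e).
  by move=> x y /(can_inj e'K) /perm_inj /(can_inj eK).
pose phi s : {perm T1} := perm (conj_inj s).
have -> : s1 = phi s2 by apply/permP => x; rewrite permE /= -es eK.
apply: odd_perm_morph => [s t|x y xy].
  by apply/permP => x; rewrite permM !permE /= permM e'K.
have -> : phi (tperm x y) = tperm (e' x) (e' y).
  apply/permP => z; rewrite permE /=.
  case: (tpermP x y (e z)) => [<-|<-|/eqP zx /eqP zy]; rewrite ?eK ?tpermL ?tpermR //.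
  by rewrite tpermD // (can2_eq e'K eK) eq_sym.
by rewrite odd_tperm (inj_eq (can_inj e'K)).
Qed.

Lemma odd_permX (T : finType) (s : {perm T}) k :
  odd_perm (s ^+ k)%g = odd k && odd_perm s.
Proof.
elim: k => [|k IHk]; first by rewrite expg0 odd_perm1.
by rewrite expgS odd_permM IHk /=; case: (odd_perm s); case: (odd k).
Qed.

Lemma odd_perm_of_odd_order (T : finType) (s : {perm T}) k :
  (s ^+ k)%g = 1%g -> odd k -> odd_perm s = false.
Proof. by move=> sk1 oddk; have := odd_permX s k; rewrite sk1 odd_perm1 oddk. Qed.

Section SkewProduct.

Variables U V : finType.

Definition fiber_fun (g : U -> {perm V}) (r : seq U) (x : U * V) : U * V :=
  if x.1 \in r then (x.1, g x.1 x.2) else x.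

Lemma fiber_fun_inj g r : injective (fiber_fun g r).
Proof.
move=> [x1 x2] [y1 y2]; rewrite /fiber_fun /=.
case: ifP => xr; case: ifP => yr //= [ex].
- by rewrite ex => /perm_inj ->.
- by move: xr; rewrite ex yr.
- by move: yr; rewrite -ex xr.
Qed.

Definition fiber_perm g r : {perm U * V} := perm (@fiber_fun_inj g r).

Lemma odd_fiber_perm1 g u : odd_perm (fiber_perm g [:: u]) = odd_perm (g u).
Proof.
pose phi d := fiber_perm (fun=> d) [:: u].
have -> : fiber_perm g [:: u] = phi (g u).
  by apply/permP => -[x1 x2]; rewrite !permE /fiber_fun inE /=; case: eqP => // ->.
apply: odd_perm_morph => [s t|x y xy].
  apply/permP => -[x1 x2]; rewrite permM !permE /fiber_fun /= !inE.
  by case: eqP => [->|/eqP/negbTE xu]; rewrite ?eqxx ?xu ?permM.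
have -> : phi (tperm x y) = tperm (u, x) (u, y).
  apply/permP => -[z1 z2]; rewrite permE /fiber_fun inE /=.
  have [->|z1u] := eqVneq z1 u; last by rewrite tpermD // xpair_eqE eq_sym (negbTE z1u).
  case: (tpermP x y z2) => [->|->|/eqP zx /eqP zy]; rewrite ?tpermL ?tpermR //.
  by rewrite tpermD // xpair_eqE eqxx eq_sym.
by rewrite odd_tperm xpair_eqE negb_and xy orbT.
Qed.

Lemma odd_fiber_perm g r c : uniq r -> (forall u, odd_perm (g u) = c) ->
  odd_perm (fiber_perm g r) = odd (size r) && c.
Proof.
move=> + gc; elim: r => [|u r IHr] /=.
  have -> : fiber_perm g [::] = 1%g by apply/permP => x; rewrite !permE.
  by rewrite odd_perm1.
case/andP=> ur /IHr {}IHr.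
have -> : fiber_perm g (u :: r) = (fiber_perm g [:: u] * fiber_perm g r)%g.
  apply/permP => -[x1 x2]; rewrite permM !permE /fiber_fun !inE /=.
  by case: eqP => [->|] //=; rewrite (negbTE ur).
by rewrite odd_permM odd_fiber_perm1 IHr gc; case: (odd (size r)); rewrite ?addbb ?addbF.
Qed.

End SkewProduct.

Lemma odd_perm_skew (U V : finType) (al : {perm U}) (be : U -> {perm V}) c
    (s : {perm U * V}) :
    (forall u, odd_perm (be u) = c) -> (forall x, s x = (al x.1, be x.1 x.2)) ->
  odd_perm s = (odd #|V| && odd_perm al) (+) (odd #|U| && c).
Proof.
move=> bec sE.
have al_inj : injective (fun x : U * V => (al x.1, x.2)).
  by move=> [x1 x2] [y1 y2] [/perm_inj -> ->].
pose base : {perm U * V} := perm al_inj.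
have odd_base : odd_perm base = odd #|V| && odd_perm al.
  rewrite cardE -(@odd_fiber_perm _ _ (fun=> al)) ?enum_uniq //.
  apply: (@odd_perm_transport _ _ (fun x => (x.2, x.1)) (fun x => (x.2, x.1))) => //.
  - by case.
  - by case.
  by case=> x1 x2; rewrite !permE /fiber_fun /= mem_enum.
have -> : s = (fiber_perm be (enum U) * base)%g.
  by apply/permP => -[x1 x2]; rewrite permM !permE /fiber_fun /= mem_enum sE.
by rewrite odd_permM odd_base (odd_fiber_perm (enum_uniq U) bec) -cardE addbC.
Qed.

Lemma eqn_modMl_coprime a n i j :
  coprime a n -> (a * i == a * j %[mod n]) = (i == j %[mod n]).
Proof.
move=> co_an; apply/idP/idP => [|/eqP ij]; last by rewrite -modnMmr ij modnMmr.
wlog le_ij : i j / i <= j.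
  by move=> W; case: (leqP i j) => [/W//|/ltnW/W]; rewrite eq_sym => W' /W'; rewrite eq_sym.
rewrite eq_sym eqn_mod_dvd ?leq_mul2l ?le_ij ?orbT // -mulnBr.
by rewrite Gauss_dvdr 1?coprime_sym // -eqn_mod_dvd // eq_sym.
Qed.

Section MulMod.

Variable n : nat.
Implicit Types (a b : nat) (s t : {perm 'I_n}).

Definition mulmod_perm a s := forall i : 'I_n, val (s i) = a * i %% n.

Lemma mulmod_perm_exists a : 0 < n -> coprime a n -> exists s, mulmod_perm a s.
Proof.
move=> n_gt0 co_an.
have mul_inj : injective (fun i : 'I_n => Ordinal (ltn_pmod (a * i) n_gt0)).
  by move=> i j [/eqP]; rewrite eqn_modMl_coprime // !modn_small // => /eqP/val_inj.
by exists (perm mul_inj) => i; rewrite permE.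
Qed.

Lemma mulmod_permM a b s t :
  mulmod_perm a s -> mulmod_perm b t -> mulmod_perm (a * b) (s * t)%g.
Proof. by move=> sa tb i; rewrite permM tb sa modnMmr mulnCA mulnA. Qed.

Lemma mulmod_permX a s k : 0 < n -> mulmod_perm a s -> mulmod_perm (a ^ k) (s ^+ k)%g.
Proof.
move=> n_gt0 sa; elim: k => [|k IHk] i; first by rewrite expg0 perm1 mul1n modn_small.
by rewrite expgSr permM sa IHk modnMmr expnS mulnA [a * _]mulnC.
Qed.

Lemma mulmod_perm_congr a b s t :
  mulmod_perm a s -> mulmod_perm b t -> a = b %[mod n] -> s = t.
Proof.
move=> sa tb eab; apply/permP => i; apply: val_inj.
by rewrite sa tb -modnMml eab modnMml.
Qed.

Definition shift_perm : {perm 'I_n} := perm (@ordS_inj n).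

Lemma shift_permX_val k (i : 'I_n) : val ((shift_perm ^+ k)%g i) = (i + k) %% n.
Proof.
elim: k => [|k IHk]; first by rewrite expg0 perm1 addn0 modn_small.
by rewrite expgSr permM permE /= IHk addnS -[(_ %% n).+1]addn1 modnDml addn1.
Qed.

Lemma odd_shift_perm : odd n -> odd_perm shift_perm = false.
Proof.
move=> odd_n; apply: (@odd_perm_of_odd_order _ _ n) => //.
by apply/permP => i; apply: val_inj; rewrite shift_permX_val perm1 modnDr modn_small.
Qed.

End MulMod.

Lemma shift_mulmod_perm_val n a (s : {perm 'I_n}) (j : 'I_n) :
  mulmod_perm a s -> val ((shift_perm n * s)%g j) = a * j.+1 %% n.
Proof. by move=> sa; rewrite permM sa permE /= modnMmr. Qed.

Section ZolotarevPrime.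

Variable p : nat.
Hypothesis p_pr : prime p.

Let p_gt0 : 0 < p := prime_gt0 p_pr.
Let p_gt1 : 1 < p := prime_gt1 p_pr.

Lemma exists_primitive_root : exists2 g, coprime g p &
  forall k, coprime k p -> exists i, k = g ^ i %[mod p].
Proof.
case/cyclicP: (units_Zp_cyclic p_pr) => u units_u.
exists (val u : 'Z_p); last move=> k co_kp.
  have u_unit := valP u; rewrite -(natr_Zp (val u)) unitZpE // in u_unit.
  by rewrite coprime_sym.
have unit_k : (k%:R : 'Z_p)%R \is a GRing.unit by rewrite unitZpE // coprime_sym.
have : FinRing.unit 'Z_p unit_k \in units_Zp p by rewrite inE.
rewrite units_u => /cycleP[i /(congr1 (fun w : {unit 'Z_p} => val (val w : 'Z_p)))].
rewrite /= FinRing.val_unitX val_Zp_nat // => ->; exists i.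
by rewrite -{1}(natr_Zp (val u)) -natrX val_Zp_nat.
Qed.

(* Multiplication by a primitive root has exactly two cycles, {0} and the units. *)
Lemma odd_mulmod_perm_primitive g (s : {perm 'I_p}) : odd p ->
    (forall k, coprime k p -> exists i, k = g ^ i %[mod p]) ->
    mulmod_perm g s -> odd_perm s.
Proof.
move=> odd_p g_gen sg.
pose o0 : 'I_p := Ordinal p_gt0; pose o1 : 'I_p := Ordinal p_gt1.
have sX i : mulmod_perm (g ^ i) (s ^+ i)%g by apply: mulmod_permX.
have orbit0 : porbit s o0 = [set o0].
  apply/setP => y; rewrite inE; apply/porbitP/eqP => [[i ->]|->].
    by apply: val_inj; rewrite sX /= muln0 mod0n.
  by exists 0; rewrite expg0 perm1.
have orbit1 x : x != o0 -> porbit s x = porbit s o1.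
  move=> x_neq0; apply/eqP; rewrite eq_porbit_mem; apply/porbitP.
  have x_gt0 : 0 < x by rewrite lt0n; apply: contra x_neq0 => /eqP x0; apply/eqP/val_inj.
  have /g_gen[i gi] : coprime x p by rewrite coprime_sym prime_coprime // gtnNdvd.
  by exists i; apply: val_inj; rewrite sX /= muln1 -gi modn_small.
have porbits_s : porbits s = [set porbit s o0; porbit s o1].
  apply/setP => S; rewrite !inE; apply/imsetP/orP => [[x _ ->]|[]/eqP->].
  - by case: (eqVneq x o0) => [->|/orbit1->]; [left|right].
  - by exists o0.
  - by exists o1.
rewrite /odd_perm porbits_s cards2 card_ord odd_p.
suff -> : porbit s o0 != porbit s o1 by [].
by rewrite orbit0; apply/eqP => /setP/(_ o1); rewrite inE porbit_id => /eqP/(congr1 val).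
Qed.

Lemma odd_mulmod_perm_prime a (s : {perm 'I_p}) :
    odd p -> coprime a p -> mulmod_perm a s ->
  odd_perm s = ~~ [exists x : 'I_p, x ^ 2 == a %[mod p]].
Proof.
move=> odd_p co_ap sa.
have [g co_gp g_gen] := exists_primitive_root.
have [sg sgg] := mulmod_perm_exists p_gt0 co_gp.
case: existsP => [[x /eqP x2a]|nonsquare] /=.
  have co_xp : coprime x p.
    move: co_ap; rewrite ![coprime _ p]coprime_sym !prime_coprime //; apply: contra => p_x.
    by rewrite /dvdn -x2a -/(dvdn p (x ^ 2)) dvdn_exp.
  have [sx sxx] := mulmod_perm_exists p_gt0 co_xp.
  have -> : s = (sx * sx)%g.
    by apply: (mulmod_perm_congr sa (mulmod_permM sxx sxx)); rewrite mulnn x2a.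
  by rewrite odd_permM addbb.
have [i ai] := g_gen _ co_ap.
have odd_i : odd i.
  apply/negPn/negP => even_i; apply: nonsquare.
  have i_half : i = i./2.*2 by rewrite -{1}(odd_double_half i) (negbTE even_i).
  exists (Ordinal (ltn_pmod (g ^ i./2) p_gt0)); apply/eqP => /=.
  by rewrite modnXm -expnM muln2 -i_half ai.
have -> : s = (sg ^+ i)%g by apply: (mulmod_perm_congr sa (mulmod_permX i p_gt0 sgg)).
by rewrite odd_permX odd_i (odd_mulmod_perm_primitive odd_p g_gen sgg).
Qed.

End ZolotarevPrime.

Lemma modn_digit m q r t : 0 < q -> r < m -> (r + m * t) %% (m * q) = r + m * (t %% q).
Proof.
move=> q_gt0 r_lt_m; rewrite {1}(divn_eq t q) mulnDr addnCA mulnA [m * _]mulnC -mulnA.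
rewrite modnMDl modn_small //; move: (t %% q) (ltn_pmod t q_gt0) => t' t'_lt_q; nia.
Qed.

Lemma mulmod_digits a m q u v : 0 < m -> 0 < q -> u < m ->
  a * (u + m * v) %% (m * q) = a * u %% m + m * ((a * u %/ m + a * v) %% q).
Proof.
move=> m_gt0 q_gt0 u_lt_m; rewrite -modn_digit ?ltn_pmod //.
congr (_ %% _); rewrite mulnDr [in RHS]mulnDr addnA mulnCA; congr (_ + _).
by rewrite addnC [m * _]mulnC -divn_eq.
Qed.

(* Writing x = u + m v with u < m turns multiplication by a modulo m q into a
   skew product of multiplication by a modulo m and translates of
   multiplication by a modulo q. *)
Lemma odd_mulmod_perm_mul n m q a
    (s : {perm 'I_n}) (s1 : {perm 'I_m}) (s2 : {perm 'I_q}) :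
    n = m * q -> odd m -> odd q -> mulmod_perm a s -> mulmod_perm a s1 -> mulmod_perm a s2 ->
  odd_perm s = odd_perm s1 (+) odd_perm s2 :> bool.
Proof.
move=> def_n odd_m odd_q sa s1a s2a.
have m_gt0 : 0 < m by case: m odd_m {def_n s1 s1a}.
have q_gt0 : 0 < q by case: q odd_q {def_n s2 s2a}.
have n_gt0 : 0 < n by rewrite def_n muln_gt0 m_gt0.
pose be (u : 'I_m) : {perm 'I_q} := (s2 * shift_perm q ^+ (a * u %/ m))%g.
have odd_be u : odd_perm (be u) = odd_perm s2.
  by rewrite odd_permM odd_permX odd_shift_perm // andbF addbF.
have skew_inj : injective (fun x : 'I_m * 'I_q => (s1 x.1, be x.1 x.2)).
  by move=> [x1 x2] [y1 y2] [/perm_inj eq1]; rewrite eq1 => /perm_inj ->.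
have <- : odd_perm (perm skew_inj) = odd_perm s1 (+) odd_perm s2.
  by rewrite (odd_perm_skew (al := s1) odd_be) ?card_ord ?odd_m ?odd_q // => x; rewrite permE.
pose e (x : 'I_n) := (Ordinal (ltn_pmod x m_gt0), Ordinal (ltn_pmod (x %/ m) q_gt0)).
pose e' (y : 'I_m * 'I_q) := Ordinal (ltn_pmod (y.1 + m * y.2) n_gt0).
have digit_lt (y : 'I_m * 'I_q) : y.1 + m * y.2 < n.
  by rewrite -(modn_small (ltn_ord y.2)) -modn_digit // def_n ltn_pmod // muln_gt0 m_gt0.
have div_lt (x : 'I_n) : x %/ m < q by rewrite ltn_divLR // mulnC -def_n.
have x_digits (x : nat) : x = x %% m + m * (x %/ m) by rewrite addnC mulnC -divn_eq.
apply: (odd_perm_transport (e := e) (e' := e')) => [x|[y1 y2]|x].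
- by apply: val_inj; rewrite /= (modn_small (div_lt x)) -x_digits modn_small.
- congr pair; apply: val_inj; rewrite /= (modn_small (digit_lt (y1, y2))).
    by rewrite addnC mulnC modnMDl modn_small.
  by rewrite addnC mulnC divnMDl // divn_small // addn0 modn_small.
- have mul_digits (y : nat) :
      a * y %% n = a * (y %% m) %% m + m * ((a * (y %% m) %/ m + a * (y %/ m)) %% q).
    by rewrite def_n {1}(x_digits y) mulmod_digits ?ltn_pmod.
  rewrite permE /e; congr pair; apply: val_inj => /=.
    by rewrite s1a sa mul_digits addnC [m * _]mulnC modnMDl modn_mod.
  rewrite permM shift_permX_val s2a sa /= modnDml (modn_small (div_lt x)).
  rewrite mul_digits addnC [m * _]mulnC divnMDl // (divn_small (ltn_pmod _ m_gt0)).
  by rewrite addn0 modn_mod addnC.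
Qed.

Local Open Scope ring_scope.

Lemma legendre_nat (a p : nat) : legendre a p =
  if (p %| a)%N then 0 else if [exists x : 'I_p, x ^ 2 == a %[mod p]]%N then 1 else -1.
Proof.
rewrite /legendre dvdzE.
have -> // : [exists x : 'I_p, (x%:Z ^+ 2 == a %[mod p])%Z]
           = [exists x : 'I_p, x ^ 2 == a %[mod p]]%N.
by apply: eq_existsb => x; rewrite expr2 -PoszM !modz_nat eqz_nat mulnn.
Qed.

Lemma jacobi_primes_below (a : int) n N : (n < N)%N ->
  jacobi a n = \prod_(0 <= p < N | prime p) legendre a p ^+ logn p n.
Proof.
move=> n_lt_N; rewrite /jacobi -(filter_pi_of n_lt_N) big_filter big_mkcond.
rewrite [RHS]big_mkcond; apply: eq_bigr => p _.
have -> : \pi(n) p = (p \in primes n) by [].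
case: (boolP (p \in primes n)) => [|p_n]; first by rewrite mem_primes => /andP[->].
by case: ifP => // _; move: p_n; rewrite -logn_gt0 lt0n negbK => /eqP->.
Qed.

Lemma jacobi_primeM (a : int) p m : prime p -> (0 < m)%N ->
  jacobi a (p * m) = legendre a p * jacobi a m.
Proof.
move=> p_pr m_gt0; have p_gt0 := prime_gt0 p_pr.
rewrite !(@jacobi_primes_below a _ (p * m).+1) ?ltnS ?leq_pmull //.
rewrite (eq_bigr (fun q => legendre a q ^+ logn q p * legendre a q ^+ logn q m));
  last by move=> q q_pr; rewrite lognM // exprD.
rewrite big_split /=; congr (_ * _).
rewrite big_mkcond (bigD1_seq p) ?mem_index_iota ?iota_uniq ?ltnS ?leq_pmulr //= p_pr.
rewrite logn_prime // eqxx expr1 big1 ?mulr1 // => q /negbTE q_neq_p.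
by case: ifP => // q_pr; rewrite logn_prime // q_neq_p expr0.
Qed.

Lemma jacobi_modz (x y : int) n : (x = y %[mod n%:Z])%Z -> jacobi x n = jacobi y n.
Proof.
move=> xy; apply: eq_big_seq => p; rewrite mem_primes => /and3P[p_pr _ p_n].
have {}xy : (x = y %[mod p%:Z])%Z.
  by apply/eqP; rewrite eqz_mod_dvd (dvdz_trans _ (_ : n%:Z %| x - y)%Z) -?eqz_mod_dvd ?xy.
rewrite /legendre (_ : (p %| x)%Z = (p %| y)%Z) ?xy //.
by apply/dvdz_mod0P/dvdz_mod0P; rewrite xy.
Qed.

Lemma jacobi_eq0 (c n : nat) : (0 < n)%N -> ~~ coprime c n -> jacobi c n = 0.
Proof.
move=> n_gt0 not_co; set d := gcdn c n.
have d_gt1 : (1 < d)%N by rewrite ltn_neqAle eq_sym not_co gcdn_gt0 n_gt0 orbT.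
have p_d : (pdiv d %| d)%N := pdiv_dvd d.
have p_primes : pdiv d \in primes n.
  by rewrite mem_primes pdiv_prime // n_gt0 (dvdn_trans p_d) ?dvdn_gcdr.
rewrite /jacobi (bigD1_seq _ p_primes (primes_uniq n)) /= legendre_nat.
have logn_neq0 : (logn (pdiv d) n == 0)%N = false by rewrite eqn0Ngt logn_gt0 p_primes.
by rewrite (dvdn_trans p_d) ?dvdn_gcdl // expr0n logn_neq0 mul0r.
Qed.

Theorem jacobi_mulmod_perm n (a : nat) (s : {perm 'I_n}) :
  odd n -> coprime a n -> mulmod_perm a s -> jacobi a n = (-1) ^+ odd_perm s.
Proof.
elim/ltn_ind: n s => n IHn s odd_n co_an sa.
have n_gt0 : (0 < n)%N by case: n odd_n {IHn co_an s sa}.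
case: (ltngtP n 1) => [|n_gt1|n1]; first by rewrite ltnS leqn0 eqn0Ngt n_gt0.
  have p_pr := pdiv_prime n_gt1; set p := pdiv n in p_pr.
  have p_n : (p %| n)%N := pdiv_dvd n; set m := (n %/ p)%N.
  have def_n : n = (p * m)%N by rewrite /m mulnC divnK.
  have m_n : (m %| n)%N by rewrite def_n dvdn_mull.
  have m_gt0 : (0 < m)%N by rewrite def_n muln_gt0 in n_gt0; case/andP: n_gt0.
  have odd_p := dvdn_odd p_n odd_n; have odd_m := dvdn_odd m_n odd_n.
  have co_ap := coprime_dvdr p_n co_an; have co_am := coprime_dvdr m_n co_an.
  have [sp spa] := mulmod_perm_exists (prime_gt0 p_pr) co_ap.
  have [sm sma] := mulmod_perm_exists m_gt0 co_am.
  have m_lt_n : (m < n)%N by rewrite def_n -{1}[m]mul1n ltn_mul2r m_gt0 prime_gt1.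
  rewrite (odd_mulmod_perm_mul def_n odd_p odd_m sa spa sma) signr_addb.
  rewrite def_n jacobi_primeM // (IHn m m_lt_n sm odd_m co_am sma); congr (_ * _).
  rewrite legendre_nat (odd_mulmod_perm_prime p_pr odd_p co_ap spa).
  by move: co_ap; rewrite coprime_sym prime_coprime // => /negbTE->; case: existsP.
have ord_n0 (i : 'I_n) : val i = 0%N by apply/eqP; rewrite -leqn0 -ltnS -n1 ltn_ord.
have -> : s = 1%g by apply/permP => i; apply: val_inj; rewrite !ord_n0.
by rewrite odd_perm1 n1 /jacobi big_nil.
Qed.

(* Factor as L U, with L lower unitriangular with all entries 1, and U zero except
   for its first row 1, y, ..., y and the diagonal entries 1 - y below it. *)
Lemma det_lower_ones_upper_const (R : comNzRingType) n (y : R) :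
  \det (\matrix_(i < n, l < n) if (l <= i)%N then 1 else y) = (1 - y) ^+ n.-1.
Proof.
case: n => [|n]; first by rewrite det_mx00.
pose L : 'M[R]_n.+1 := \matrix_(i, l) (if (l <= i)%N then 1 else 0).
pose U : 'M[R]_n.+1 := \matrix_(i, l)
  if i == ord0 then (if l == ord0 then 1 else y) else if i == l then 1 - y else 0.
have -> : \matrix_(i < n.+1, l < n.+1) (if (l <= i)%N then 1 else y) = L *m U.
  apply/matrixP => i l; rewrite !mxE big_ord_recl !mxE /= mul1r.
  case: (unliftP ord0 l) => [l'|] ->; last first.
    by rewrite big1 ?addr0 // => k _; rewrite !mxE mulr0.
  rewrite (bigD1 l') //= !mxE eqxx big1 ?addr0 => [|k /negbTE k_neq_l']; last first.
    by rewrite !mxE /= (inj_eq (@lift_inj _ ord0)) k_neq_l' mulr0.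
  by rewrite /bump /= !add1n; case: leqP; rewrite ?mul1r ?mul0r ?addr0 // addrC subrK.
have L_trig : is_trig_mx L by apply/is_trig_mxP => i j ij; rewrite mxE leqNgt ij.
have Ut_trig : is_trig_mx U^T.
  apply/is_trig_mxP => i j ij; rewrite !mxE.
  have j_neq0 : j != ord0 by apply: contraTneq ij => ->.
  by rewrite (negbTE j_neq0) -val_eqE gtn_eqF.
rewrite det_mulmx det_trig // big1 ?mul1r => [|i _]; last by rewrite mxE leqnn.
rewrite -det_tr det_trig // big_ord_recl !mxE eqxx mul1r.
by rewrite (eq_bigr (fun=> 1 - y)) ?prodr_const ?card_ord // => i _; rewrite !mxE eqxx.
Qed.

Lemma mulmod_collision (c n : nat) : (0 < n)%N -> ~~ coprime c n ->
  exists j1 j2 : 'I_n, j1 != j2 /\ (c * j1.+1 = c * j2.+1 %[mod n])%N.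
Proof.
move=> n_gt0 not_co; set d := gcdn c n.
have d_gt1 : (1 < d)%N by rewrite ltn_neqAle eq_sym not_co gcdn_gt0 n_gt0 orbT.
have d_n : (d %| n)%N := dvdn_gcdr c n.
exists (Ordinal n_gt0), (Ordinal (ltn_Pdiv d_gt1 n_gt0)); split.
  by rewrite -val_eqE /= eq_sym -lt0n divn_gt0 ?(ltnW d_gt1) // dvdn_leq.
have -> : (c * (n %/ d).+1 = c %/ d * n + c)%N.
  by rewrite mulnSr -{1}(divnK (dvdn_gcdl c n)) -/d -mulnA (mulnC d) divnK.
by rewrite /= muln1 modnMDl.
Qed.

Lemma det_mulmod_le_mx (R : comNzRingType) (y : R) (a b n : nat) : odd n ->
  \det (\matrix_(j < n, k < n) if (b * k.+1 %% n <= a * j.+1 %% n)%N then 1 else y)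
  = (jacobi (a * b)%N n)%:~R * (1 - y) ^+ n.-1.
Proof.
move=> odd_n; have n_gt0 : (0 < n)%N by case: n odd_n.
have [/andP[co_an co_bn]|not_co] := boolP (coprime a n && coprime b n); last first.
  rewrite jacobi_eq0 ?coprimeMl // mul0r.
  have [co_an|/(mulmod_collision n_gt0)[j1 [j2 [j12 eq_j]]]] := boolP (coprime a n).
    have /(mulmod_collision n_gt0)[k1 [k2 [k12 eq_k]]] : ~~ coprime b n.
      by move: not_co; rewrite co_an.
    by rewrite -det_tr (determinant_alternate k12) // => j; rewrite !mxE eq_k.
  by rewrite (determinant_alternate j12) // => k; rewrite !mxE eq_j.
have [sa saa] := mulmod_perm_exists n_gt0 co_an.
have [sb sbb] := mulmod_perm_exists n_gt0 co_bn.
have -> : \matrix_(j < n, k < n) (if (b * k.+1 %% n <= a * j.+1 %% n)%N then 1 else y)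
    = row_perm (shift_perm n * sa) (col_perm (shift_perm n * sb)
        (\matrix_(i < n, l < n) if (l <= i)%N then 1 else y)).
  apply/matrixP => j k.
  by rewrite !mxE (shift_mulmod_perm_val _ saa) (shift_mulmod_perm_val _ sbb).
rewrite row_permE col_permE !det_mulmx !det_perm det_lower_ones_upper_const.
rewrite odd_permV !odd_permM odd_shift_perm //=.
rewrite (jacobi_mulmod_perm odd_n _ (mulmod_permM saa sbb)) ?coprimeMl ?co_an //.
by rewrite odd_permM signr_addb intrM !intr_sign -mulrA [_ * (-1) ^+ _]mulrC.
Qed.

Lemma floor_div_subE (x y : int) n : (0 < n)%N -> floor_div (x - y) n
  = floor_div x n - floor_div y n - (if (y %% n <= x %% n)%Z then 0 else 1).
Proof.
move=> n_gt0; have n_neq0 : n%:Z != 0 by rewrite eqz_nat -lt0n.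
have u_ge0 := modz_ge0 x n_neq0; have w_ge0 := modz_ge0 y n_neq0.
have u_lt := ltz_pmod x (n_gt0 : 0 < n%:Z); have w_lt := ltz_pmod y (n_gt0 : 0 < n%:Z).
rewrite /floor_div {1}(divz_eq x n) {1}(divz_eq y n).
set Q := (x %/ n)%Z; set S := (y %/ n)%Z; set u := (x %% n)%Z; set w := (y %% n)%Z.
case: lerP => [w_le_u|u_lt_w]; last first.
  have -> : Q * n + u - (S * n + w) = (Q - S - 1) * n + (u - w + n) by ring.
  by rewrite divzMDl // divz_small ?addr0 // absz_nat; lia.
have -> : Q * n + u - (S * n + w) = (Q - S) * n + (u - w) by ring.
by rewrite divzMDl // divz_small ?addr0 ?subr0 // absz_nat; lia.
Qed.

Lemma modz_mul_nat (a : int) (m n : nat) : (0 < n)%N ->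
  ((a * m%:Z) %% n)%Z = (`|(a %% n)%Z| * m %% n)%N.
Proof.
move=> n_gt0; have n_neq0 : n%:Z != 0 by rewrite eqz_nat -lt0n.
by rewrite -modzMml -[(a %% n)%Z]gez0_abs ?modz_ge0 // -PoszM modz_nat.
Qed.

Lemma sum_ord_odd n : odd n -> (\sum_(j < n) j = n * n./2)%N.
Proof.
move=> odd_n; rewrite -(big_mkord xpredT (fun j => j)) bin2_sum bin2.
by rewrite -{2}(odd_double_half n) odd_n /= -doubleMr doubleK.
Qed.

Lemma sum_floor_div_mul (a : int) n : odd n -> coprime `|(a %% n)%Z|%N n ->
  \sum_(j < n) floor_div (a * j.+1%:Z) n = a * (uphalf n)%:Z - (n./2)%:Z.
Proof.
move=> odd_n co_an; have n_gt0 : (0 < n)%N by case: n odd_n {co_an}.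
have n_neq0 : n%:Z != 0 by rewrite eqz_nat -lt0n.
set a' := `|(a %% n)%Z|%N in co_an.
have [s sa] := mulmod_perm_exists n_gt0 co_an.
have sum_residues : (\sum_(j < n) (a' * j.+1 %% n) = \sum_(j < n) j)%N.
  rewrite [RHS](reindex_inj (@perm_inj _ (shift_perm n * s)%g)).
  by apply: eq_bigr => j _; rewrite (shift_mulmod_perm_val _ sa).
have nQ (j : 'I_n) : n%:Z * floor_div (a * j.+1%:Z) n = a * j.+1%:Z - (a' * j.+1 %% n)%N%:Z.
  by rewrite -modz_mul_nat // /floor_div mulrC [X in _ = X - _](divz_eq _ n) addrK.
apply: (mulfI n_neq0); rewrite mulr_sumr (eq_bigr _ (fun j _ => nQ j)).
rewrite sumrB -mulr_sumr -!(big_morph Posz PoszD (erefl 0%:Z)) sum_residues.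
rewrite (eq_bigr (fun j : 'I_n => (j + 1)%N)) => [|j _]; last by rewrite addn1.
have uphalfE : uphalf n = (n./2 + 1)%N by rewrite uphalf_half odd_n addnC.
rewrite big_split /= sum_ord_odd // sum1_card card_ord uphalfE !PoszD PoszM; ring.
Qed.

Theorem det_floor_div_pow (F : fieldType) (x : F) (a b : int) n : x != 0 -> odd n ->
  \det (\matrix_(j < n, k < n) x ^ floor_div (a * j.+1%:Z - b * k.+1%:Z) n)
  = (jacobi (a * b) n)%:~R * x ^ ((a - b) * (uphalf n)%:Z) * (1 - x^-1) ^+ n.-1.
Proof.
move=> x_neq0 odd_n; have n_gt0 : (0 < n)%N by case: n odd_n.
set a' := `|(a %% n)%Z|%N; set b' := `|(b %% n)%Z|%N.
pose Q (j : 'I_n) := floor_div (a * j.+1%:Z) n.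
pose S (k : 'I_n) := floor_div (b * k.+1%:Z) n.
pose G := \matrix_(j < n, k < n) if (b' * k.+1 %% n <= a' * j.+1 %% n)%N then 1 else x^-1.
have -> : \matrix_(j < n, k < n) x ^ floor_div (a * j.+1%:Z - b * k.+1%:Z) n
    = diag_mx (\row_j x ^ Q j) *m G *m diag_mx (\row_k x ^ (- S k)).
  apply/matrixP => j k; rewrite mul_mx_diag mul_diag_mx !mxE floor_div_subE //.
  rewrite !modz_mul_nat // lez_nat -/a' -/b' -/(Q j) -/(S k).
  by case: leqP => _; rewrite addrAC !expfzDr // ?oppr0 ?expr0z ?mulr1 ?exprN1.
have jacobi_res : jacobi (a * b) n = jacobi (a' * b')%N n.
  apply: jacobi_modz; rewrite PoszM !gez0_abs ?modz_ge0 ?eqz_nat -?lt0n //.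
  by rewrite modzMml modzMmr.
rewrite !det_mulmx !det_diag det_mulmod_le_mx // jacobi_res.
have [/andP[co_an co_bn]|not_co] := boolP (coprime a' n && coprime b' n); last first.
  by rewrite jacobi_eq0 ?coprimeMl // !(mulr0, mul0r).
have prod_pow (f : 'I_n -> int) : \prod_(j < n) (\row_j x ^ f j) 0 j = x ^ (\sum_j f j).
  rewrite (big_morph (fun m => x ^ m) (fun m k => expfzDr m k x_neq0) (expr0z x)).
  by apply: eq_bigr => j _; rewrite mxE.
rewrite !prod_pow sumrN (sum_floor_div_mul odd_n co_an) (sum_floor_div_mul odd_n co_bn).
have -> : (a - b) * (uphalf n)%:Z
    = a * (uphalf n)%:Z - (n./2)%:Z + - (b * (uphalf n)%:Z - (n./2)%:Z) by ring.
by rewrite [in RHS]expfzDr //; ring.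
Qed.

Theorem det_ceil_div_pow (F : fieldType) (x : F) (a b : int) n : x != 0 -> odd n ->
  \det (\matrix_(j < n, k < n) x ^ ceil_div (b * j.+1%:Z - a * k.+1%:Z) n)
  = (jacobi (a * b) n)%:~R * x ^ ((b - a) * (uphalf n)%:Z) * (1 - x) ^+ n.-1.
Proof.
move=> x_neq0 odd_n.
have -> : \matrix_(j < n, k < n) x ^ ceil_div (b * j.+1%:Z - a * k.+1%:Z) n
    = (\matrix_(j < n, k < n) x^-1 ^ floor_div (a * j.+1%:Z - b * k.+1%:Z) n)^T.
  by apply/matrixP => j k; rewrite !mxE /ceil_div exprz_inv opprB.
by rewrite det_tr det_floor_div_pow ?invr_eq0 // invrK exprz_inv -mulNr opprB.
Qed.

Lemma uphalf_add_pred n : odd n -> (uphalf n + n.-1 = (3 * n).-1 %/ 2)%N.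
Proof.
move=> odd_n; rewrite uphalf_half odd_n.
by move: (odd_double_half n); rewrite odd_n -muln2 /= => <-; lia.
Qed.

Theorem corollary1p3 (a : int) (n : nat) (hn : (0 < n)%N) (hodd : odd n) :
  let A1 := \matrix_(j < n, k < n)
      ((-1 : rat) ^ floor_div (a * (j.+1)%:Z - (a + 1) * (k.+1)%:Z) n) in
  let A2 := \matrix_(j < n, k < n)
      ((-1 : rat) ^ ceil_div ((a + 1) * (j.+1)%:Z - a * (k.+1)%:Z) n) in
  let B1 := \matrix_(j < n, k < n)
      ((2 : rat) ^ floor_div (a * (j.+1)%:Z - (a + 1) * (k.+1)%:Z) n) in
  let B2 := \matrix_(j < n, k < n)
      ((2 : rat) ^ ceil_div ((a + 1) * (j.+1)%:Z - a * (k.+1)%:Z) n) in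
  let J : rat := (jacobi (a * (a + 1)) n)%:~R in
  [/\ \det A1 = J * (-1) ^+ (n.+1 %/ 2) * 2 ^+ n.-1,
      \det A2 = J * (-1) ^+ (n.+1 %/ 2) * 2 ^+ n.-1,
      \det B1 = J * 2 ^- ((3 * n).-1 %/ 2)
    & \det B2 = J * 2 ^+ (n.+1 %/ 2)].
Proof.
move=> A1 A2 B1 B2 J.
have [m1_neq0 two_neq0] : (-1 : rat) != 0 /\ (2 : rat) != 0 by [].
have floor_exp : a - (a + 1) = -1 by ring.
have ceil_exp : a + 1 - a = 1 by ring.
have even_pred : odd n.-1 = false by move: hodd; rewrite -{1}(prednK hn) => /negbTE.
rewrite divn2; split.
- rewrite det_floor_div_pow // floor_exp mulN1r -exprnN invr_sign.
  by rewrite (@invrN1 rat) opprK.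
- by rewrite det_ceil_div_pow // ceil_exp mul1r opprK.
- rewrite det_floor_div_pow // floor_exp mulN1r -exprnN.
  by rewrite (_ : 1 - 2^-1 = 2^-1 :> rat) // exprVn -mulrA -invfM -exprD uphalf_add_pred.
- rewrite det_ceil_div_pow // ceil_exp mul1r (_ : 1 - 2 = -1 :> rat) //.
  by rewrite -signr_odd even_pred mulr1.
Qed.
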